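(* Let $0<\nu<1$ and $0\le\mu<1$. Then for all $t>0$, $$t\,f_{\nu,\mu-1}(t)=(\mu-1)\,f_{\nu,\mu}(t)+\nu\, f_{\nu,\mu-\nu}(t),$$ and, since $\frac{d}{dt}f_{\nu,\mu}(t)=f_{\nu,\mu-1}(t)$, $$t\,\frac{d f_{\nu,\mu}(t)}{dt}=(\mu-1)\,f_{\nu,\mu}(t)+\nu\, f_{\nu,\mu-\nu}(t).$$
   Context: For $0<\nu<1$ and real $\rho$, $f_{\nu,\rho}$ denotes the inverse Laplace transform of $s^{-\rho}e^{-s^{\nu}}$: $f_{\nu,\rho}(t)=\frac{1}{2\pi i}\int_{c-i\infty}^{c+i\infty}e^{st}s^{-\rho}e^{-s^{\nu}}\,ds$, $t>0$, $c>0$, principal branches (absolutely convergent for every real $\rho$). *)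

From Stdlib Require Import Reals.
From Coquelicot Require Import Coquelicot.
Open Scope R_scope.

Definition Cexp (z : C) : C :=
  (exp (Re z) * cos (Im z), exp (Re z) * sin (Im z)).

(* principal argument, in (-PI, PI] *)
Definition Carg (z : C) : R :=
  let x := Re z in let y := Im z in
  if Rlt_dec 0 x then atan (y / x)
  else if Rlt_dec x 0 then
         (if Rle_dec 0 y then atan (y / x) + PI else atan (y / x) - PI)
  else if Rlt_dec 0 y then PI / 2
  else if Rlt_dec y 0 then - (PI / 2)
  else 0.

(* principal logarithm (only used away from 0) *)
Definition Clog (z : C) : C := (ln (Cmod z), Carg z).

Definition Cpow (s : C) (a : R) : C := Cexp (RtoC a * Clog s).

(* f_{nu,rho}(t) = (1/(2 pi i)) \int_{c - i oo}^{c + i oo} e^{s t} s^{-rho} e^{-s^nu} ds.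
   Parametrising s = c + i y gives ds = i dy, hence
   f_{nu,rho}(t) = (1/(2 pi)) \int_{-oo}^{+oo} e^{(c+iy) t} (c+iy)^{-rho} e^{-(c+iy)^nu} dy,
   taken as an improper Riemann integral over the whole line. *)
Definition bromwich_integrand (nu rho c t : R) (y : R) : C :=
  let s : C := (c, y) in
  (Cexp (RtoC t * s) * Cpow s (- rho) * Cexp (- Cpow s nu))%C.

Definition f_nu_rho (nu rho c t : R) : C :=
  (RtoC (/ (2 * PI)) *
   @RInt_gen C_R_CompleteNormedModule (bromwich_integrand nu rho c t)
            (Rbar_locally m_infty) (Rbar_locally p_infty))%C.

(* Write s = c + iy on the Bromwich line and G_ρ(t, y) = e^{ts} s^{-ρ} e^{-s^ν}, so that
   f_{ν,ρ}(t) = (2π)^{-1} ∫ G_ρ(t, y) dy.  Since ds/dy = i,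
     ∂_y G_ρ = i (t G_ρ - ρ G_{ρ+1} - ν G_{ρ+1-ν}),
   and |G_ρ(t, y)| = O(1/(1+y²)) because Re s^ν ≥ cos(νπ/2) |s|^ν grows like |y|^ν.
   Integrating this derivative over the whole line gives 0, which is the recurrence
   t f_{ν,ρ} = ρ f_{ν,ρ+1} + ν f_{ν,ρ+1-ν}; the first identity is the case ρ = μ - 1.
   For the t-derivative, |G_μ(t+h) - G_μ(t) - h G_{μ-1}(t)| ≤ e^{c|h|} h² |G_{μ-2}(t)|
   pointwise, so the remainder of the integrals is O(h²) and f_{ν,μ}' = f_{ν,μ-1}. *)

From Pilot Require Import Defs.
From Stdlib Require Import Reals Lra.
From Coquelicot Require Import Coquelicot.
(* Coquelicot's [Cpow] (natural powers) would otherwise shadow the [Cpow] of Defs. *)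
Import Defs.
Open Scope R_scope.

(** * Derivatives of complex-valued functions of a real variable *)

Lemma is_derive_eq_R (f : R -> R) x (l l' : R) :
  is_derive f x l -> l = l' -> is_derive f x l'.
Proof. now intros H <-. Qed.

Lemma is_derive_eq_C (f : R -> C) x (l l' : C) :
  is_derive f x l -> l = l' -> is_derive f x l'.
Proof. now intros H <-. Qed.

Lemma is_derive_Rmult (f g : R -> R) x df dg :
  is_derive f x df -> is_derive g x dg ->
  is_derive (fun y => f y * g y) x (df * g x + f x * dg).
Proof. intros Hf Hg. exact (is_derive_mult f g x df dg Hf Hg Rmult_comm). Qed.

Lemma is_derive_Rcomp (f g : R -> R) x df dg :
  is_derive f (g x) df -> is_derive g x dg -> is_derive (fun y => f (g y)) x (dg * df).
Proof. exact (is_derive_comp f g x df dg). Qed.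

Lemma is_derive_Re (u : R -> C) x (l : C) :
  is_derive u x l -> is_derive (fun y => Re (u y)) x (Re l).
Proof.
  intros Hu.
  exact (filterdiff_comp' u (fun z : C_R_NormedModule => fst z) x (fun y => scal y l) _ Hu
           (filterdiff_linear _ is_linear_fst)).
Qed.

Lemma is_derive_Im (u : R -> C) x (l : C) :
  is_derive u x l -> is_derive (fun y => Im (u y)) x (Im l).
Proof.
  intros Hu.
  exact (filterdiff_comp' u (fun z : C_R_NormedModule => snd z) x (fun y => scal y l) _ Hu
           (filterdiff_linear _ is_linear_snd)).
Qed.

Lemma is_derive_C_of_parts (u : R -> C) x (l : C) :
  is_derive (fun y => Re (u y)) x (Re l) -> is_derive (fun y => Im (u y)) x (Im l) ->
  is_derive u x l.
Proof.
  intros H1 H2.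
  assert (Hpair : filterdiff (fun p : prod_NormedModule R_AbsRing R_NormedModule R_NormedModule =>
                                 (fst p, snd p) : C_R_NormedModule)
                    (locally (Re (u x), Im (u x)))
                    (fun p => (fst p, snd p) : C_R_NormedModule)).
  { apply filterdiff_linear. repeat split.
    exists 1. split; [lra|]. intros [p q]. rewrite Rmult_1_l. apply Rle_refl. }
  refine (filterdiff_ext_locally _ u x _ _
            (filterdiff_comp'_2 (fun y => Re (u y)) (fun y => Im (u y))
               (fun p q => (p, q) : C_R_NormedModule) x _ _ _ H1 H2 Hpair)).
  apply filter_forall. intros y. now destruct (u y).
Qed.

Lemma is_derive_C_unique (u : R -> C) x (l1 l2 : C) :
  is_derive u x l1 -> is_derive u x l2 -> l1 = l2.
Proof.
  intros H1 H2. apply injective_projections.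
  - change (Re l1 = Re l2).
    rewrite <- (is_derive_unique _ _ _ (is_derive_Re u x l1 H1)).
    exact (is_derive_unique _ _ _ (is_derive_Re u x l2 H2)).
  - change (Im l1 = Im l2).
    rewrite <- (is_derive_unique _ _ _ (is_derive_Im u x l1 H1)).
    exact (is_derive_unique _ _ _ (is_derive_Im u x l2 H2)).
Qed.

Lemma is_derive_Cmult (u v : R -> C) x du dv :
  is_derive u x du -> is_derive v x dv ->
  is_derive (fun y => (u y * v y)%C) x (du * v x + u x * dv)%C.
Proof.
  intros Hu Hv.
  pose proof (is_derive_Re _ _ _ Hu) as Hu1. pose proof (is_derive_Im _ _ _ Hu) as Hu2.
  pose proof (is_derive_Re _ _ _ Hv) as Hv1. pose proof (is_derive_Im _ _ _ Hv) as Hv2.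
  apply is_derive_C_of_parts.
  - replace (Re (du * v x + u x * dv)%C)
      with (Re du * Re (v x) + Re (u x) * Re dv - (Im du * Im (v x) + Im (u x) * Im dv))
      by (unfold Re, Im; simpl; ring).
    apply (is_derive_ext (fun y => Re (u y) * Re (v y) - Im (u y) * Im (v y))); [reflexivity|].
    exact (is_derive_minus _ _ x _ _ (is_derive_Rmult _ _ x _ _ Hu1 Hv1)
             (is_derive_Rmult _ _ x _ _ Hu2 Hv2)).
  - replace (Im (du * v x + u x * dv)%C)
      with (Re du * Im (v x) + Re (u x) * Im dv + (Im du * Re (v x) + Im (u x) * Re dv))
      by (unfold Re, Im; simpl; ring).
    apply (is_derive_ext (fun y => Re (u y) * Im (v y) + Im (u y) * Re (v y))); [reflexivity|].
    exact (is_derive_plus _ _ x _ _ (is_derive_Rmult _ _ x _ _ Hu1 Hv2)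
             (is_derive_Rmult _ _ x _ _ Hu2 Hv1)).
Qed.

Lemma is_derive_Cexp (w : R -> C) x dw :
  is_derive w x dw -> is_derive (fun y => Cexp (w y)) x (dw * Cexp (w x))%C.
Proof.
  intros Hw.
  pose proof (is_derive_Re _ _ _ Hw) as H1. pose proof (is_derive_Im _ _ _ Hw) as H2.
  pose proof (is_derive_Rcomp exp _ x _ _ (is_derive_exp _) H1) as E.
  pose proof (is_derive_Rcomp cos _ x _ _ (is_derive_cos _) H2) as Co.
  pose proof (is_derive_Rcomp sin _ x _ _ (is_derive_sin _) H2) as Si.
  apply is_derive_C_of_parts.
  - eapply is_derive_eq_R; [exact (is_derive_Rmult _ _ x _ _ E Co)|].
    unfold Cexp, Re, Im; simpl. ring.
  - eapply is_derive_eq_R; [exact (is_derive_Rmult _ _ x _ _ E Si)|].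
    unfold Cexp, Re, Im; simpl. ring.
Qed.

Lemma is_derive_Copp (u : R -> C) x du :
  is_derive u x du -> is_derive (fun y => (- u y)%C) x (- du)%C.
Proof. exact (is_derive_opp u x du). Qed.

Lemma is_derive_Cminus (u v : R -> C) x du dv :
  is_derive u x du -> is_derive v x dv -> is_derive (fun y => (u y - v y)%C) x (du - dv)%C.
Proof. exact (is_derive_minus u v x du dv). Qed.

Lemma is_derive_Cconst (k : C) x : is_derive (fun _ : R => k) x (RtoC 0).
Proof. exact (is_derive_const (V := C_R_NormedModule) k x). Qed.

Lemma is_derive_RtoC_mult (s : C) x : is_derive (fun y => (RtoC y * s)%C) x s.
Proof.
  apply is_derive_C_of_parts.
  - apply (is_derive_ext (fun y => Re s * y)); [intros; unfold Re, Im; simpl; ring|].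
    eapply is_derive_eq_R; [apply is_derive_scal, is_derive_id|apply Rmult_1_r].
  - apply (is_derive_ext (fun y => Im s * y)); [intros; unfold Re, Im; simpl; ring|].
    eapply is_derive_eq_R; [apply is_derive_scal, is_derive_id|apply Rmult_1_r].
Qed.

Lemma is_derive_vertical_line (c x : R) : is_derive (fun y : R => (c, y) : C) x Ci.
Proof.
  apply is_derive_C_of_parts.
  - exact (is_derive_const (V := R_NormedModule) c x).
  - exact (is_derive_id (K := R_AbsRing) x).
Qed.

(** * Exponential, logarithm and powers on the line Re s = c *)

Lemma Cexp_plus (z w : C) : Cexp (z + w) = (Cexp z * Cexp w)%C.
Proof.
  destruct z as [a b], w as [p q]. unfold Cexp, Re, Im; simpl.
  rewrite exp_plus, cos_plus, sin_plus. apply injective_projections; simpl; ring.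
Qed.

Lemma Cexp_0 : Cexp (RtoC 0) = RtoC 1.
Proof.
  unfold Cexp, Re, Im; simpl. rewrite exp_0, cos_0, sin_0.
  apply injective_projections; simpl; ring.
Qed.

Lemma Cmod_Cexp (z : C) : Cmod (Cexp z) = exp (Re z).
Proof.
  unfold Cexp, Cmod; simpl.
  replace ((exp (Re z) * cos (Im z)) * ((exp (Re z) * cos (Im z)) * 1)
           + (exp (Re z) * sin (Im z)) * ((exp (Re z) * sin (Im z)) * 1))
    with (exp (Re z) * exp (Re z) * (sin (Im z) ^ 2 + cos (Im z) ^ 2)) by ring.
  rewrite <- (Rsqr_pow2 (sin _)), <- (Rsqr_pow2 (cos _)), sin2_cos2, Rmult_1_r.
  apply sqrt_square, Rlt_le, exp_pos.
Qed.

Section VerticalLine.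

Variable c : R.
Hypothesis Hc : 0 < c.

Lemma Clog_vertical_line (y : R) : Clog (c, y) = (ln (sqrt (c ^ 2 + y ^ 2)), atan (y / c)).
Proof.
  unfold Clog, Carg, Re, Im; simpl. destruct (Rlt_dec 0 c); [|lra].
  unfold Cmod; simpl. do 3 f_equal; ring.
Qed.

Lemma modulus_vertical_line_pos (y : R) : 0 < sqrt (c ^ 2 + y ^ 2).
Proof. apply sqrt_lt_R0. nra. Qed.

Lemma modulus_vertical_line_ge (y : R) : c <= sqrt (c ^ 2 + y ^ 2).
Proof. rewrite <- (sqrt_square c) at 1 by lra. apply sqrt_le_1_alt. nra. Qed.

Lemma Cexp_Clog_vertical_line (y : R) : Cexp (Clog (c, y)) = (c, y).
Proof.
  rewrite Clog_vertical_line. set (r := sqrt (c ^ 2 + y ^ 2)).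
  unfold Cexp, Re, Im; simpl.
  assert (Hr : 0 < r) by apply modulus_vertical_line_pos.
  assert (Hr2 : r * r = c ^ 2 + y ^ 2) by (apply sqrt_sqrt; nra).
  rewrite exp_ln, cos_atan, sin_atan by exact Hr.
  assert (E : sqrt (1 + (y / c)²) = r / c).
  { replace (1 + (y / c)²) with ((r / c) * (r / c)).
    - apply sqrt_square, Rlt_le, Rdiv_lt_0_compat; lra.
    - transitivity ((r * r) / (c * c)); [field; lra|].
      rewrite Hr2. unfold Rsqr. field. lra. }
  rewrite E. apply injective_projections; simpl; field; lra.
Qed.

Lemma Cpow_plus (s : C) (a b : R) : (Cpow s a * Cpow s b)%C = Cpow s (a + b).
Proof. unfold Cpow. rewrite <- Cexp_plus. f_equal. rewrite RtoC_plus. ring. Qed.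

Lemma Cpow_1_vertical_line (y : R) : Cpow (c, y) 1 = (c, y).
Proof.
  unfold Cpow. rewrite <- (Cexp_Clog_vertical_line y) at 2. f_equal.
  apply injective_projections; simpl; ring.
Qed.

Lemma Cpow_plus_1_vertical_line (y a : R) : Cpow (c, y) (a + 1) = (Cpow (c, y) a * (c, y))%C.
Proof. now rewrite <- Cpow_plus, Cpow_1_vertical_line. Qed.

Lemma Cmod_Cpow_vertical_line (y a : R) :
  Cmod (Cpow (c, y) a) = exp (a * ln (sqrt (c ^ 2 + y ^ 2))).
Proof.
  unfold Cpow. rewrite Cmod_Cexp, Clog_vertical_line. unfold Re; simpl. f_equal. ring.
Qed.

Lemma is_derive_Clog_vertical_line (x : R) :
  is_derive (fun y => Clog (c, y)) x (x / (c ^ 2 + x ^ 2), c / (c ^ 2 + x ^ 2)).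
Proof.
  apply (is_derive_ext (fun y => (ln (sqrt (c ^ 2 + y ^ 2)), atan (y / c)) : C)).
  { intros y. now rewrite Clog_vertical_line. }
  assert (Hp := modulus_vertical_line_pos x).
  assert (Hr2 : sqrt (c ^ 2 + x ^ 2) * sqrt (c ^ 2 + x ^ 2) = c ^ 2 + x ^ 2)
    by (apply sqrt_sqrt; nra).
  apply is_derive_C_of_parts; unfold Re, Im; cbn [fst snd].
  - auto_derive; replace (c * (c * 1) + x * (x * 1)) with (c ^ 2 + x ^ 2) by ring.
    + split; [nra | lra].
    + rewrite <- Hr2 at 3. field. lra.
  - auto_derive; [lra|]. field. nra.
Qed.

Lemma is_derive_Cpow_vertical_line (a x : R) :
  is_derive (fun y => Cpow (c, y) a) x (RtoC a * Ci * Cpow (c, x) (a - 1))%C.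
Proof.
  eapply is_derive_eq_C.
  { apply (is_derive_Cexp (fun y => (RtoC a * Clog (c, y))%C)).
    apply is_derive_Cmult; [apply is_derive_Cconst | apply is_derive_Clog_vertical_line]. }
  fold (Cpow (c, x) a).
  cbv beta.
  set (L := ((x / (c ^ 2 + x ^ 2))%R, (c / (c ^ 2 + x ^ 2))%R) : C).
  assert (HL : (L * (c, x))%C = Ci) by (apply injective_projections; simpl; field; nra).
  replace (Cpow (c, x) a) with (Cpow (c, x) (a - 1) * (c, x))%C
    by (rewrite <- Cpow_plus_1_vertical_line; f_equal; ring).
  rewrite <- HL. ring.
Qed.

Lemma Re_Cpow_vertical_line_ge (nu y : R) : 0 < nu < 1 ->
  cos (nu * PI / 2) * exp (nu * ln (sqrt (c ^ 2 + y ^ 2))) <= Re (Cpow (c, y) nu).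
Proof.
  intros Hnu. unfold Cpow. rewrite Clog_vertical_line.
  unfold Cexp, Re, Im, Cmult, RtoC; cbn [fst snd].
  replace (nu * ln (sqrt (c ^ 2 + y ^ 2)) - 0 * atan (y / c))
    with (nu * ln (sqrt (c ^ 2 + y ^ 2))) by ring.
  replace (nu * atan (y / c) + 0 * ln (sqrt (c ^ 2 + y ^ 2))) with (nu * atan (y / c)) by ring.
  rewrite Rmult_comm. apply Rmult_le_compat_l; [apply Rlt_le, exp_pos|].
  assert (Hb := atan_bound (y / c)). assert (HPI := PI_RGT_0).
  replace (cos (nu * atan (y / c))) with (cos (Rabs (nu * atan (y / c))))
    by (unfold Rabs; destruct Rcase_abs; [apply cos_neg | reflexivity]).
  assert (Hth : Rabs (nu * atan (y / c)) <= nu * PI / 2).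
  { rewrite Rabs_mult, (Rabs_right nu) by lra.
    replace (nu * PI / 2) with (nu * (PI / 2)) by field.
    apply Rmult_le_compat_l; [lra|]. apply Rabs_le. lra. }
  pose proof (Rabs_pos (nu * atan (y / c))).
  apply cos_decr_1; nra.
Qed.

End VerticalLine.

(** * Decay of the Bromwich integrand *)

Lemma exp_le_compat (x y : R) : x <= y -> exp x <= exp y.
Proof. intros [H | ->]; [apply Rlt_le, exp_increasing, H | apply Rle_refl]. Qed.

Lemma linear_minus_exp_bounded (q k nu u0 : R) : 0 < k -> 0 < nu ->
  exists B, forall u, u0 <= u -> q * u - k * exp (nu * u) <= B.
Proof.
  intros Hk Hnu.
  (* Bound exp from below by its tangent line at m, where k nu e^m = |q| + k nu. *)
  set (m := ln (Rabs q / (k * nu) + 1)).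
  assert (Hpos : 0 < Rabs q / (k * nu) + 1).
  { pose proof (Rdiv_le_0_compat (Rabs q) (k * nu) (Rabs_pos q) ltac:(nra)). lra. }
  assert (HE : k * nu * exp m = Rabs q + k * nu)
    by (unfold m; rewrite exp_ln by exact Hpos; field; nra).
  exists ((q - k * nu * exp m) * u0 - k * exp m * (1 - m)).
  intros u Hu.
  assert (Htangent : exp m * (1 + (nu * u - m)) <= exp (nu * u)).
  { replace (exp (nu * u)) with (exp m * exp (nu * u - m)) by (rewrite <- exp_plus; f_equal; ring).
    apply Rmult_le_compat_l; [apply Rlt_le, exp_pos | apply exp_ineq1_le]. }
  assert (Hslope : (q - k * nu * exp m) * (u - u0) <= 0).
  { apply Rmult_le_0_r; [|lra]. rewrite HE. pose proof (Rle_abs q). nra. }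
  nra.
Qed.

Lemma bromwich_integrandE (nu rho c t y : R) :
  bromwich_integrand nu rho c t y
  = (Cexp (RtoC t * (c, y)) * Cpow (c, y) (- rho) * Cexp (- Cpow (c, y) nu))%C.
Proof. reflexivity. Qed.

Local Notation continuous_C f x :=
  (@continuous R_UniformSpace (NormedModule.UniformSpace R_AbsRing C_R_NormedModule) f x).

Section BromwichIntegrand.

Variables nu c t : R.
Hypothesis Hnu : 0 < nu < 1.
Hypothesis Hc : 0 < c.

Lemma is_derive_bromwich_integrand (rho x : R) :
  is_derive (bromwich_integrand nu rho c t) x
    (Ci * (RtoC t * bromwich_integrand nu rho c t x
           - RtoC rho * bromwich_integrand nu (rho + 1) c t x
           - RtoC nu * bromwich_integrand nu (rho + 1 - nu) c t x))%C.
Proof.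
  eapply is_derive_eq_C.
  { apply (is_derive_ext (fun y =>
             Cexp (RtoC t * (c, y)) * Cpow (c, y) (- rho) * Cexp (- Cpow (c, y) nu))%C);
      [reflexivity|].
    apply is_derive_Cmult; [apply is_derive_Cmult|].
    - apply (is_derive_Cexp (fun y => RtoC t * (c, y))%C).
      apply is_derive_Cmult; [apply is_derive_Cconst | apply is_derive_vertical_line].
    - apply is_derive_Cpow_vertical_line, Hc.
    - apply (is_derive_Cexp (fun y => - Cpow (c, y) nu)%C).
      apply is_derive_Copp.
      apply is_derive_Cpow_vertical_line, Hc. }
  rewrite !bromwich_integrandE.
  replace (- (rho + 1)) with (- rho - 1) by ring.
  replace (- (rho + 1 - nu)) with (- rho + (nu - 1)) by ring.
  rewrite <- Cpow_plus, RtoC_opp.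
  change (AbsRing.sort R_AbsRing) with R. ring.
Qed.

Lemma continuous_bromwich_integrand (rho x : R) :
  continuous_C (bromwich_integrand nu rho c t) x.
Proof. apply ex_derive_continuous. eexists. apply is_derive_bromwich_integrand. Qed.

Lemma Cmod_bromwich_integrand (rho y : R) :
  Cmod (bromwich_integrand nu rho c t y)
  = exp (t * c) * exp (- rho * ln (sqrt (c ^ 2 + y ^ 2))) * exp (- Re (Cpow (c, y) nu)).
Proof.
  rewrite bromwich_integrandE, !Cmod_mult, !Cmod_Cexp, Cmod_Cpow_vertical_line by exact Hc.
  replace (Re (RtoC t * (c, y))) with (t * c) by (unfold Re; simpl; ring).
  replace (Re (- Cpow (c, y) nu)) with (- Re (Cpow (c, y) nu)) by (unfold Re; simpl; ring).
  reflexivity.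
Qed.

Lemma bromwich_integrand_decay (rho : R) :
  exists K, forall y, Cmod (bromwich_integrand nu rho c t y) <= K / (1 + y ^ 2).
Proof.
  set (k := cos (nu * PI / 2)).
  assert (Hk : 0 < k) by (apply cos_gt_0; pose proof PI_RGT_0; nra).
  destruct (linear_minus_exp_bounded (2 - rho) k nu (ln c) Hk ltac:(lra)) as [B HB].
  set (A := 1 + / c ^ 2).
  assert (HA : 0 < A) by (pose proof (Rinv_0_lt_compat (c ^ 2) ltac:(nra)); unfold A; lra).
  exists (exp (t * c) * A * exp B). intros y.
  pose proof (pow2_ge_0 y).
  rewrite Cmod_bromwich_integrand.
  set (r := sqrt (c ^ 2 + y ^ 2)). set (u := ln r).
  assert (Hr : 0 < r) by apply modulus_vertical_line_pos, Hc.
  assert (Hr2 : exp (2 * u) = c ^ 2 + y ^ 2).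
  { replace (2 * u) with (u + u) by ring. unfold u.
    rewrite exp_plus, exp_ln by exact Hr. apply sqrt_sqrt. nra. }
  assert (Hy : 1 + y ^ 2 <= A * exp (2 * u)).
  { rewrite Hr2. unfold A.
    replace ((1 + / c ^ 2) * (c ^ 2 + y ^ 2)) with (c ^ 2 + 1 + y ^ 2 + y ^ 2 / c ^ 2)
      by (field; nra).
    pose proof (Rdiv_le_0_compat (y ^ 2) (c ^ 2) ltac:(nra) ltac:(nra)). nra. }
  assert (Hre : exp (- Re (Cpow (c, y) nu)) <= exp (- (k * exp (nu * u)))).
  { apply exp_le_compat.
    pose proof (Re_Cpow_vertical_line_ge c Hc nu y Hnu) as Hre. fold r u k in Hre. lra. }
  assert (Hexp : exp (- rho * u) * exp (- (k * exp (nu * u))) * exp (2 * u) <= exp B).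
  { rewrite <- !exp_plus. apply exp_le_compat.
    assert (Hu : ln c <= u) by (apply ln_le; [lra | apply modulus_vertical_line_ge, Hc]).
    specialize (HB u Hu). lra. }
  assert (Hprod : exp (- Re (Cpow (c, y) nu)) * (1 + y ^ 2)
                  <= exp (- (k * exp (nu * u))) * (A * exp (2 * u))).
  { apply Rmult_le_compat; [apply Rlt_le, exp_pos | lra | exact Hre | exact Hy]. }
  pose proof (exp_pos (t * c)). pose proof (exp_pos (- rho * u)).
  apply (Rle_div_r _ _ (1 + y ^ 2)); [lra|].
  apply Rle_trans with
    (exp (t * c) * exp (- rho * u) * (exp (- (k * exp (nu * u))) * (A * exp (2 * u)))).
  { rewrite Rmult_assoc. apply Rmult_le_compat_l; [nra|]. exact Hprod. }
  replace (exp (t * c) * exp (- rho * u) * (exp (- (k * exp (nu * u))) * (A * exp (2 * u))))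
    with (exp (t * c) * A * (exp (- rho * u) * exp (- (k * exp (nu * u))) * exp (2 * u)))
    by ring.
  apply Rmult_le_compat_l; [nra | exact Hexp].
Qed.

End BromwichIntegrand.

(** * Improper integrals over the real line *)

Local Notation is_RInt_line f l :=
  (is_RInt_gen (V := C_R_NormedModule) f (Rbar_locally m_infty) (Rbar_locally p_infty) l).
Local Notation RInt_line f :=
  (RInt_gen (V := C_R_CompleteNormedModule) f (Rbar_locally m_infty) (Rbar_locally p_infty)).
Local Notation RInt_C f a b := (RInt (V := C_R_CompleteNormedModule) f a b).

Lemma ball_C_of_Cmod_lt (z w : C) (eps : R) :
  Cmod (w - z) < eps -> ball (M := C_R_CompleteNormedModule) z eps w.
Proof.
  intros H. apply (@norm_compat1 R_AbsRing C_R_CompleteNormedModule). now rewrite <- Cmod_norm.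
Qed.

Lemma Cmod_lt_of_ball_C (z w : C) (eps : posreal) :
  ball (M := C_R_CompleteNormedModule) z eps w ->
  Cmod (w - z) < norm_factor (K := R_AbsRing) (V := C_R_NormedModule) * eps.
Proof. intros H. rewrite Cmod_norm. exact (norm_compat2 (K := R_AbsRing) _ _ _ H). Qed.

Lemma is_RInt_line_Cmult (f : R -> C) (k : R) (l : C) :
  is_RInt_line f l -> is_RInt_line (fun y => RtoC k * f y)%C (RtoC k * l)%C.
Proof.
  intros H. rewrite <- scal_R_Cmult.
  apply (is_RInt_gen_ext (fun y => scal k (f y))).
  - apply filter_forall. intros ab y _. apply scal_R_Cmult.
  - exact (is_RInt_gen_scal f k l H).
Qed.

Lemma is_RInt_line_Cminus (f g : R -> C) (lf lg : C) :
  is_RInt_line f lf -> is_RInt_line g lg -> is_RInt_line (fun y => f y - g y)%C (lf - lg)%C.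
Proof. exact (is_RInt_gen_minus f g lf lg). Qed.

Lemma RInt_line_unique (f : R -> C) (l : C) : is_RInt_line f l -> RInt_line f = l.
Proof.
  exact (is_RInt_gen_unique (V := C_R_CompleteNormedModule)
           (FFa := Proper_StrongProper _ (Rbar_locally_filter _))
           (FFb := Proper_StrongProper _ (Rbar_locally_filter _)) f l).
Qed.

Lemma Cmod_is_RInt_line_le (f : R -> C) (B : R) (l : C) :
  (forall a b v, a <= b -> is_RInt f a b v -> Cmod v <= B) ->
  is_RInt_line f l -> Cmod l <= B.
Proof.
  intros Hbound Hl.
  destruct (Rle_lt_dec (Cmod l) B) as [H | H]; [exact H | exfalso].
  set (nf := norm_factor (K := R_AbsRing) (V := C_R_NormedModule)).
  assert (Hnf : 0 < nf) by apply norm_factor_gt_0.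
  assert (He : 0 < (Cmod l - B) / (2 * nf)) by (apply Rdiv_lt_0_compat; lra).
  set (e := mkposreal _ He).
  destruct (Hl (ball l e) (locally_ball l e)) as [Q R' [M1 HM1] [M2 HM2] HH].
  set (a := Rmin M1 M2 - 1). set (b := Rmax M1 M2 + 1).
  pose proof (Rmin_l M1 M2). pose proof (Rmax_r M1 M2). pose proof (Rmin_r M1 M2).
  pose proof (Rmax_l M1 M2).
  destruct (HH a b (HM1 a ltac:(unfold a; lra)) (HM2 b ltac:(unfold b; lra))) as [v [Hv Hball]].
  assert (Hvb : Cmod v <= B) by (apply (Hbound a b v); [unfold a, b; lra | exact Hv]).
  assert (Hlv := Cmod_lt_of_ball_C l v e Hball). simpl in Hlv. fold nf in Hlv.
  assert (Htri : Cmod l <= Cmod v + Cmod (v - l)).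
  { replace l with (v + - (v - l))%C at 1 by ring.
    rewrite <- (Cmod_opp (v - l)). apply Cmod_triangle. }
  assert (nf * ((Cmod l - B) / (2 * nf)) = (Cmod l - B) / 2) by (field; lra).
  lra.
Qed.

Lemma atan_close_to_PI2 (d : R) : 0 < d -> exists M, PI / 2 - d < atan M.
Proof.
  intros Hd. pose proof PI_RGT_0.
  pose proof (Rmin_l (d / 2) (PI / 4)). pose proof (Rmin_r (d / 2) (PI / 4)).
  assert (0 < Rmin (d / 2) (PI / 4)) by (apply Rmin_glb_lt; lra).
  exists (tan (PI / 2 - Rmin (d / 2) (PI / 4))). rewrite atan_tan; lra.
Qed.

Section DominatedIntegrand.

Variables (f : R -> C) (K : R).
Hypothesis Hdom : forall y, Cmod (f y) <= K / (1 + y ^ 2).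

Lemma dominating_constant_nonneg : 0 <= K.
Proof.
  specialize (Hdom 0). pose proof (Cmod_ge_0 (f 0)).
  replace (K / (1 + 0 ^ 2)) with K in Hdom by (simpl; field). lra.
Qed.

Lemma is_RInt_dominating (a b : R) :
  is_RInt (fun y => K / (1 + y ^ 2)) a b (K * (atan b - atan a)).
Proof.
  replace (K * (atan b - atan a)) with (minus (K * atan b) (K * atan a))
    by (unfold minus, plus, opp; simpl; ring).
  apply (is_RInt_derive (fun y => K * atan y)).
  - intros x _. eapply is_derive_eq_R; [apply is_derive_scal, is_derive_atan|].
    unfold Rsqr. field. nra.
  - intros x _. apply (ex_derive_continuous (V := R_NormedModule)). auto_derive. nra.
Qed.

Lemma Cmod_is_RInt_le_atan (a b : R) (v : C) :
  a <= b -> is_RInt f a b v -> Cmod v <= K * (atan b - atan a).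
Proof.
  intros Hab Hv. rewrite Cmod_norm.
  apply (norm_RInt_le f (fun y => K / (1 + y ^ 2)) a b v _ Hab);
    [| exact Hv | apply is_RInt_dominating].
  intros x _. rewrite <- Cmod_norm. apply Hdom.
Qed.

Lemma Cmod_is_RInt_line_le_PI (l : C) : is_RInt_line f l -> Cmod l <= K * PI.
Proof.
  apply Cmod_is_RInt_line_le. intros a b v Hab Hv.
  apply Rle_trans with (K * (atan b - atan a)); [now apply Cmod_is_RInt_le_atan|].
  pose proof (atan_bound a). pose proof (atan_bound b). pose proof dominating_constant_nonneg.
  apply Rmult_le_compat_l; lra.
Qed.

Lemma dominated_eventually_small (eps : R) : 0 < eps ->
  exists M, forall y, M < Rabs y -> Cmod (f y) < eps.
Proof.
  intros Heps. pose proof dominating_constant_nonneg.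
  assert (HKe : 0 <= K / eps) by (apply Rdiv_le_0_compat; lra).
  exists (K / eps + 1). intros y Hy.
  assert (Hy2 : K / eps + 1 < y ^ 2).
  { rewrite <- (pow2_abs y). simpl. nra. }
  apply Rle_lt_trans with (K / (1 + y ^ 2)); [apply Hdom|].
  apply Rlt_div_l; [lra|].
  replace K with (eps * (K / eps)) at 1 by (field; lra). nra.
Qed.

Lemma is_RInt_line_derive_of_dominated (df : R -> C) :
  (forall y, is_derive f y (df y)) -> (forall y, continuous_C df y) ->
  is_RInt_line df (RtoC 0).
Proof.
  intros Hder Hdc P [eps Heps].
  pose proof (cond_pos eps).
  destruct (dominated_eventually_small (eps / 2)) as [M HM]; [lra|].
  apply Filter_prod with (fun a => a < - M) (fun b => M < b); [now exists (- M) | now exists M |].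
  intros a b Ha Hb. exists (minus (f b) (f a)). split.
  - apply (is_RInt_derive (V := C_R_CompleteNormedModule)); intros x _; [apply Hder | apply Hdc].
  - apply Heps, ball_C_of_Cmod_lt. change (Cmod (f b - f a - RtoC 0)%C < eps).
    replace (f b - f a - RtoC 0)%C with (f b + - f a)%C by ring.
    eapply Rle_lt_trans; [apply Cmod_triangle|]. rewrite Cmod_opp.
    assert (Cmod (f b) < eps / 2) by (apply HM; pose proof (Rle_abs b); simpl in *; lra).
    assert (Cmod (f a) < eps / 2)
      by (apply HM; rewrite <- Rabs_Ropp; pose proof (Rle_abs (- a)); simpl in *; lra).
    lra.
Qed.

Hypothesis Hcont : forall y, continuous_C f y.

Lemma ex_RInt_continuous_C (a b : R) : ex_RInt (V := C_R_CompleteNormedModule) f a b.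
Proof. apply ex_RInt_continuous. intros z _. apply Hcont. Qed.

Lemma is_RInt_RInt_C (a b : R) : is_RInt f a b (RInt_C f a b).
Proof. apply (RInt_correct (V := C_R_CompleteNormedModule)), ex_RInt_continuous_C. Qed.

Lemma Cmod_RInt_tails_le (a b M : R) : a <= - M -> M <= b ->
  Cmod (RInt_C f a b - RInt_C f (- M) M)
  <= 2 * K * (PI / 2 - atan M).
Proof.
  intros Ha Hb.
  rewrite <- (RInt_Chasles (V := C_R_CompleteNormedModule) f a (- M) b),
    <- (RInt_Chasles (V := C_R_CompleteNormedModule) f (- M) M b)
    by apply ex_RInt_continuous_C.
  set (A := RInt_C f a (- M)). set (I := RInt_C f (- M) M). set (D := RInt_C f M b).
  change (Cmod (A + (I + D) - I)%C <= 2 * K * (PI / 2 - atan M)).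
  replace (A + (I + D) - I)%C with (A + D)%C by ring.
  assert (HA : Cmod A <= K * (atan (- M) - atan a)).
  { apply Cmod_is_RInt_le_atan; [exact Ha | apply is_RInt_RInt_C]. }
  assert (HD : Cmod D <= K * (atan b - atan M)).
  { apply Cmod_is_RInt_le_atan; [lra | apply is_RInt_RInt_C]. }
  rewrite atan_opp in HA.
  pose proof (atan_bound a). pose proof (atan_bound b). pose proof dominating_constant_nonneg.
  pose proof (Cmod_triangle A D). nra.
Qed.

Lemma ex_RInt_line_of_dominated : exists l, is_RInt_line f l.
Proof.
  set (F := filtermap
              (fun ab : R * R => RInt_C f (fst ab) (snd ab))
              (filter_prod (Rbar_locally m_infty) (Rbar_locally p_infty))).
  assert (FF : ProperFilter F)
    by (apply filtermap_proper_filter, filter_prod_proper; apply Rbar_locally_filter).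
  assert (Hcauchy : cauchy F).
  { intros eps. pose proof dominating_constant_nonneg. pose proof (cond_pos eps).
    destruct (atan_close_to_PI2 (eps / (2 * (K + 1)))) as [M HM].
    { apply Rdiv_lt_0_compat; lra. }
    exists (RInt_C f (- M) M).
    apply Filter_prod with (fun a => a < - M) (fun b => M < b); [now exists (- M) | now exists M |].
    intros a b Ha Hb. apply ball_C_of_Cmod_lt.
    eapply Rle_lt_trans; [apply Cmod_RInt_tails_le; simpl; lra|].
    assert (K * (PI / 2 - atan M) <= K * (eps / (2 * (K + 1)))) by (apply Rmult_le_compat_l; lra).
    assert (2 * (K + 1) * (eps / (2 * (K + 1))) = eps) by (field; lra).
    nra. }
  exists (lim F). intros P [eps Heps].
  destruct (complete_cauchy F FF Hcauchy eps) as [Q R' HQ HR HH].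
  apply Filter_prod with Q R'; [exact HQ | exact HR |].
  intros a b Qa Rb. exists (RInt_C f a b).
  split; [apply is_RInt_RInt_C | apply Heps, HH; assumption].
Qed.

End DominatedIntegrand.

(** * Differentiation under the integral sign *)

Lemma Cmod_increment_le (F dF : R -> C) (h M : R) :
  (forall x, is_derive F x (dF x)) -> (forall x, continuous_C dF x) ->
  (forall x, Rabs x <= Rabs h -> Cmod (dF x) <= M) ->
  Cmod (F h - F 0)%C <= M * Rabs h.
Proof.
  intros Hder Hcont HM.
  rewrite Cmod_norm, Rmult_comm. replace (Rabs h) with (Rabs (h - 0)) by (f_equal; ring).
  apply (norm_RInt_le_const_abs dF 0 h).
  - intros x Hx. rewrite <- Cmod_norm. apply HM.
    apply Rabs_le. destruct (Rle_or_lt 0 h).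
    + rewrite Rmin_left, Rmax_right in Hx by lra. rewrite Rabs_right; lra.
    + rewrite Rmin_right, Rmax_left in Hx by lra. rewrite Rabs_left; lra.
  - apply (is_RInt_derive (V := C_R_CompleteNormedModule)); intros x _; [apply Hder | apply Hcont].
Qed.

Lemma is_derive_Cexp_scaled (s : C) x :
  is_derive (fun y => Cexp (RtoC y * s)) x (s * Cexp (RtoC x * s))%C.
Proof. apply is_derive_Cexp, is_derive_RtoC_mult. Qed.

Lemma Cmod_Cexp_sub_1_le (s : C) (h : R) :
  Cmod (Cexp (RtoC h * s) - RtoC 1)%C <= Cmod s * exp (Rabs h * Rabs (Re s)) * Rabs h.
Proof.
  replace (RtoC 1) with (Cexp (RtoC 0 * s)) by (rewrite Cmult_0_l; apply Cexp_0).
  apply (Cmod_increment_le (fun y => Cexp (RtoC y * s)) (fun y => s * Cexp (RtoC y * s))%C).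
  - intros x. apply is_derive_Cexp_scaled.
  - intros x. apply ex_derive_continuous. eexists.
    apply is_derive_Cmult; [apply is_derive_Cconst | apply is_derive_Cexp_scaled].
  - intros x Hx. rewrite Cmod_mult, Cmod_Cexp.
    apply Rmult_le_compat_l; [apply Cmod_ge_0|]. apply exp_le_compat.
    rewrite re_scal_l. eapply Rle_trans; [apply Rle_abs|].
    rewrite Rabs_mult. apply Rmult_le_compat_r; [apply Rabs_pos | exact Hx].
Qed.

Lemma Cmod_Cexp_taylor1_le (s : C) (h : R) :
  Cmod (Cexp (RtoC h * s) - RtoC 1 - RtoC h * s)%C
  <= Cmod s * Cmod s * exp (Rabs h * Rabs (Re s)) * (h * h).
Proof.
  replace (Cexp (RtoC h * s) - RtoC 1 - RtoC h * s)%C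
    with (Cexp (RtoC h * s) - RtoC h * s - (Cexp (RtoC 0 * s) - RtoC 0 * s))%C
    by (rewrite Cmult_0_l, Cexp_0; ring).
  replace (h * h) with (Rabs h * Rabs h) by exact (eq_sym (Rsqr_abs h)).
  rewrite <- Rmult_assoc.
  apply (Cmod_increment_le (fun y => Cexp (RtoC y * s) - RtoC y * s)%C
           (fun y => s * (Cexp (RtoC y * s) - RtoC 1))%C).
  - intros x. eapply is_derive_eq_C.
    + apply is_derive_Cminus; [apply is_derive_Cexp_scaled | apply is_derive_RtoC_mult].
    + ring.
  - intros x. apply ex_derive_continuous. eexists.
    apply is_derive_Cmult; [apply is_derive_Cconst|].
    apply is_derive_Cminus; [apply is_derive_Cexp_scaled | apply is_derive_Cconst].
  - intros x Hx. rewrite Cmod_mult, !Rmult_assoc.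
    apply Rmult_le_compat_l; [apply Cmod_ge_0|].
    eapply Rle_trans; [apply Cmod_Cexp_sub_1_le|].
    pose proof (Cmod_ge_0 s). pose proof (Rabs_pos x). pose proof (Rabs_pos (Re s)).
    assert (exp (Rabs x * Rabs (Re s)) <= exp (Rabs h * Rabs (Re s)))
      by (apply exp_le_compat, Rmult_le_compat_r; assumption).
    pose proof (exp_pos (Rabs x * Rabs (Re s))).
    rewrite <- Rmult_assoc. apply Rmult_le_compat; nra.
Qed.

Lemma is_derive_of_quadratic_remainder (Phi : R -> C) (t : R) (L : C) (B : R) :
  (forall h, Rabs h <= 1 -> Cmod (Phi (t + h)%R - Phi t - RtoC h * L)%C <= B * (h * h)) ->
  is_derive Phi t L.
Proof.
  intros HQ. split; [apply is_linear_scal_l|].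
  intros x Hx. apply (is_filter_lim_locally_unique (V := AbsRing_NormedModule R_AbsRing)) in Hx.
  subst x.
  intros eps. pose proof (cond_pos eps). pose proof (Rabs_pos B).
  pose proof (Rmin_l 1 (eps / (Rabs B + 1))). pose proof (Rmin_r 1 (eps / (Rabs B + 1))).
  set (delta := Rmin 1 (eps / (Rabs B + 1))) in *.
  assert (Hd : 0 < delta) by (apply Rmin_glb_lt; [lra | apply Rdiv_lt_0_compat; lra]).
  exists (mkposreal _ Hd). intros u Hu. change (Rabs (u - t) < delta) in Hu.
  assert (E : norm (K := R_AbsRing) (V := C_R_NormedModule)
                (minus (minus (Phi u) (Phi t)) (scal (minus u t) L))
              = Cmod (Phi (t + (u - t))%R - Phi t - RtoC (u - t) * L)%C)
    by (rewrite Cmod_norm, Rplus_minus, <- scal_R_Cmult; reflexivity).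
  eapply Rle_trans; [right; exact E|]. change (norm (minus u t)) with (Rabs (u - t)).
  set (h := u - t) in *.
  eapply Rle_trans; [apply HQ; lra|].
  assert (Hsmall : Rabs B * Rabs h <= eps).
  { apply Rle_trans with (Rabs B * (eps / (Rabs B + 1))); [apply Rmult_le_compat_l; lra|].
    apply Rle_trans with ((Rabs B + 1) * (eps / (Rabs B + 1))); [|right; field; lra].
    apply Rmult_le_compat_r; [apply Rlt_le, Rdiv_lt_0_compat |]; lra. }
  replace (h * h) with (Rabs h * Rabs h) by exact (eq_sym (Rsqr_abs h)).
  pose proof (Rle_abs B). pose proof (Rabs_pos h).
  apply Rle_trans with ((Rabs B * Rabs h) * Rabs h); [|apply Rmult_le_compat_r; assumption].
  rewrite Rmult_assoc. apply Rmult_le_compat_r; [nra | assumption].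
Qed.

Section BromwichIntegral.

Variables nu c : R.
Hypothesis Hnu : 0 < nu < 1.
Hypothesis Hc : 0 < c.

Local Notation G := (bromwich_integrand nu).

Lemma is_RInt_line_bromwich (rho t : R) : is_RInt_line (G rho c t) (RInt_line (G rho c t)).
Proof.
  destruct (bromwich_integrand_decay nu c t Hnu Hc rho) as [K HK].
  destruct (ex_RInt_line_of_dominated _ K HK (continuous_bromwich_integrand nu c t Hc rho))
    as [l Hl].
  now rewrite (RInt_line_unique _ l Hl).
Qed.

Lemma bromwich_recurrence (rho t : R) :
  (RtoC t * RInt_line (G rho c t)
   = RtoC rho * RInt_line (G (rho + 1) c t) + RtoC nu * RInt_line (G (rho + 1 - nu) c t))%C.
Proof.
  set (dG := fun y =>
    (RtoC t * G rho c t y - RtoC rho * G (rho + 1) c t y - RtoC nu * G (rho + 1 - nu) c t y)%C).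
  assert (Hint : is_RInt_line dG
    (RtoC t * RInt_line (G rho c t) - RtoC rho * RInt_line (G (rho + 1) c t)
     - RtoC nu * RInt_line (G (rho + 1 - nu) c t))%C).
  { apply is_RInt_line_Cminus; [apply is_RInt_line_Cminus|];
      apply is_RInt_line_Cmult, is_RInt_line_bromwich. }
  (* dG is the y-derivative of -i G_rho, which decays at both ends. *)
  destruct (bromwich_integrand_decay nu c t Hnu Hc rho) as [K HK].
  assert (Hzero : is_RInt_line dG (RtoC 0)).
  { assert (Hder : forall y, is_derive (fun y => - Ci * G rho c t y)%C y (dG y)).
    { intros y. eapply is_derive_eq_C.
      - apply is_derive_Cmult; [apply is_derive_Cconst | apply is_derive_bromwich_integrand, Hc].
      - unfold dG. rewrite <- Ci_inv. field. apply Ci_nz. }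
    apply (is_RInt_line_derive_of_dominated (fun y => - Ci * G rho c t y)%C K).
    - intros y. rewrite Cmod_mult, Cmod_opp, Cmod_Ci, Rmult_1_l. apply HK.
    - exact Hder.
    - intros y. unfold dG. apply ex_derive_continuous. eexists.
      apply is_derive_Cminus; [apply is_derive_Cminus|];
        (apply is_derive_Cmult;
           [apply is_derive_Cconst | apply is_derive_bromwich_integrand, Hc]). }
  apply RInt_line_unique in Hint. apply RInt_line_unique in Hzero.
  rewrite Hint in Hzero.
  transitivity ((RtoC t * RInt_line (G rho c t) - RtoC rho * RInt_line (G (rho + 1) c t)
     - RtoC nu * RInt_line (G (rho + 1 - nu) c t))
     + (RtoC rho * RInt_line (G (rho + 1) c t) + RtoC nu * RInt_line (G (rho + 1 - nu) c t)))%C;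
    [ring|]. rewrite Hzero. ring.
Qed.

Lemma bromwich_increment_le (rho t h y : R) :
  Cmod (G rho c (t + h) y - G rho c t y - RtoC h * G (rho - 1) c t y)%C
  <= exp (Rabs h * c) * (h * h) * Cmod (G (rho - 2) c t y).
Proof.
  rewrite !bromwich_integrandE, RtoC_plus, Cmult_plus_distr_r, Cexp_plus.
  replace (- (rho - 1)) with (- rho + 1) by ring.
  replace (- (rho - 2)) with (- rho + 1 + 1) by ring.
  rewrite !Cpow_plus_1_vertical_line by exact Hc.
  set (A := Cexp (RtoC t * (c, y))). set (P := Cpow (c, y) (- rho)).
  set (E := Cexp (- Cpow (c, y) nu)). set (Eh := Cexp (RtoC h * (c, y))).
  replace (A * Eh * P * E - A * P * E - RtoC h * (A * (P * (c, y)) * E))%C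
    with (A * P * E * (Eh - RtoC 1 - RtoC h * (c, y)))%C by ring.
  rewrite !Cmod_mult.
  assert (Htaylor := Cmod_Cexp_taylor1_le (c, y) h). fold Eh in Htaylor.
  replace (Rabs (Re (c, y))) with c in Htaylor by (unfold Re; simpl; rewrite Rabs_right; lra).
  pose proof (Cmod_ge_0 A). pose proof (Cmod_ge_0 P). pose proof (Cmod_ge_0 E).
  replace (exp (Rabs h * c) * (h * h) * (Cmod A * (Cmod P * Cmod (c, y) * Cmod (c, y)) * Cmod E))
    with (Cmod A * Cmod P * Cmod E * (Cmod (c, y) * Cmod (c, y) * exp (Rabs h * c) * (h * h)))
    by ring.
  apply Rmult_le_compat_l; [|exact Htaylor].
  apply Rmult_le_pos; [apply Rmult_le_pos|]; assumption.
Qed.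

Lemma is_derive_RInt_line_bromwich (rho t : R) :
  is_derive (fun u => RInt_line (G rho c u)) t (RInt_line (G (rho - 1) c t)).
Proof.
  destruct (bromwich_integrand_decay nu c t Hnu Hc (rho - 2)) as [K HK].
  apply (is_derive_of_quadratic_remainder _ _ _ (exp c * K * PI)).
  intros h Hh.
  replace (exp c * K * PI * (h * h)) with (exp c * (h * h) * K * PI) by ring.
  apply (Cmod_is_RInt_line_le_PI
           (fun y => G rho c (t + h) y - G rho c t y - RtoC h * G (rho - 1) c t y)%C).
  - intros y. eapply Rle_trans; [apply bromwich_increment_le|].
    assert (exp (Rabs h * c) <= exp c) by (apply exp_le_compat; nra).
    pose proof (Rle_0_sqr h). pose proof (pow2_ge_0 y).
    replace (exp c * (h * h) * K / (1 + y ^ 2)) with (exp c * (h * h) * (K / (1 + y ^ 2)))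
      by (field; lra).
    apply Rmult_le_compat; [| apply Cmod_ge_0 | | apply HK].
    + apply Rmult_le_pos; [apply Rlt_le, exp_pos | assumption].
    + apply Rmult_le_compat_r; assumption.
  - apply is_RInt_line_Cminus; [apply is_RInt_line_Cminus | apply is_RInt_line_Cmult];
      apply is_RInt_line_bromwich.
Qed.

Lemma f_nu_rho_recurrence (rho t : R) :
  (RtoC t * f_nu_rho nu rho c t
   = RtoC rho * f_nu_rho nu (rho + 1) c t + RtoC nu * f_nu_rho nu (rho + 1 - nu) c t)%C.
Proof.
  unfold f_nu_rho.
  transitivity (RtoC (/ (2 * PI)) * (RtoC t * RInt_line (G rho c t)))%C; [ring|].
  rewrite bromwich_recurrence. ring.
Qed.

Lemma is_derive_f_nu_rho (rho t : R) :
  is_derive (fun u => f_nu_rho nu rho c u) t (f_nu_rho nu (rho - 1) c t).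
Proof.
  unfold f_nu_rho. eapply is_derive_eq_C.
  - apply is_derive_Cmult; [apply is_derive_Cconst | apply is_derive_RInt_line_bromwich].
  - cbv beta. ring.
Qed.

End BromwichIntegral.

Theorem mainTheorem4 (nu mu c : R) :
  0 < nu < 1 -> 0 <= mu < 1 -> 0 < c ->
  forall t : R, 0 < t ->
    (RtoC t * f_nu_rho nu (mu - 1) c t
       = RtoC (mu - 1) * f_nu_rho nu mu c t + RtoC nu * f_nu_rho nu (mu - nu) c t)%C
    /\ is_derive (fun u : R => f_nu_rho nu mu c u) t (f_nu_rho nu (mu - 1) c t)
    /\ (forall df : C, is_derive (fun u : R => f_nu_rho nu mu c u) t df ->
          (RtoC t * df
             = RtoC (mu - 1) * f_nu_rho nu mu c t + RtoC nu * f_nu_rho nu (mu - nu) c t)%C).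
Proof.
  (* The identities hold for every real mu and t. *)
  intros Hnu _ Hc t _.
  assert (Hrec := f_nu_rho_recurrence nu c Hnu Hc (mu - 1) t).
  replace (mu - 1 + 1) with mu in Hrec by ring.
  replace (mu - 1 + 1 - nu) with (mu - nu) in Hrec by ring.
  assert (Hder := is_derive_f_nu_rho nu c Hnu Hc mu t).
  split; [exact Hrec | split; [exact Hder |]].
  intros df Hdf. now rewrite (is_derive_C_unique _ _ _ _ Hdf Hder).
Qed.
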